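(* Assume the standing assumptions and let $f$ satisfy (F). Let $\tilde s$ be the solution of the linearized equation below and $u$ the solution of the discrete heat problem $\partial_tu=\Delta_hu$ on $(0,T]\times\Omega_h^+$, $u(0,\cdot)=0$, $u(t,0)=\psi(t)$. Then $\tilde v:=\tilde s-u$ satisfies $\|\tilde v\|_{L^\infty([0,T]\times\Omega_h^+)}\le2\eta$.
   Context: Discrete setting: $h>0$, $\Omega_h^+=\{h,2h,\dots\}$, $\Omega_{h,0}^+=\Omega_h^+\cup\{0\}$, $\|f\|_{L^p(\Omega_h^+)}=(h\sum_{z\in\Omega_h^+}|f(z)|^p)^{1/p}$, $D^\pm_h$ the forward/backward differences $D^+_hf(x)=\frac{f(x+h)-f(x)}{h}$, $D^-_hf(x)=\frac{f(x)-f(x-h)}{h}$, $\Delta_h=D^+_hD^-_h$. Standing assumptions: $A=1$, $B\in\{-1,1\}$, $\varphi(c)=A+Bc$, $\lambda>0$, $T>0$, $\eta>0$; $\psi\in C^\beta([0,T])$ for some $\beta\in(1/4,1/2)$, $0\le\psi\le\eta$, $\psi(0)=0$; $0\le s_0\le\eta$, $s_0(0)=0$, $s_0,D^+_hs_0\in L^2(\Omega_h^+)$; $0<c_m\le c_0\le C_0$, $C_0-c_0,D^+_hc_0\in L^2(\Omega_h^+)$; $0<\varphi_{\min}\le\varphi(c)\le\varphi_{\max}$ for $c\in[0,C_0]$; if $B=1$ then $\eta<1$. Conditions (F) on Borel $f:[0,T]\times\Omega_{h,0}^+\to\mathbb{R}$: $f\in C([0,T],L^2(\Omega_h^+))$,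 $\sup_t\|f(t)\|^2_{L^2}+\int_0^T\|D^+_hf\|^2_{L^2}dt\le K$ for some $K>0$, $f(t,0)=\psi(t)$, $0\le f\le\eta$. Linearized equation: with $g=Ac_0[\varphi(c_0)e^{\lambda A\int_0^tf\,d\tau}-Bc_0]^{-1}$, $b_g=\frac{B}{2(A+Bg)}$, $\gamma_g=\lambda g$, $\tilde s$ is the bounded solution of $\partial_t\tilde s=\Delta_h\tilde s+b_g[D^+_hgD^+_h\tilde s+D^-_hgD^-_h\tilde s]+\gamma_g\tilde s(Bf-1)$ on $(0,T]\times\Omega_h^+$, $\tilde s(0,\cdot)=s_0$, $\tilde s(t,0)=\psi(t)$. *)

From Stdlib Require Import Reals.
From Coquelicot Require Import Coquelicot.
Open Scope R_scope.

(* Lattice functions: a grid function v : nat -> R represents x = n*h |-> v n,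
   n = 0 is the boundary point 0, n >= 1 are the points of Omega_h^+. *)

Definition Dp (h : R) (v : nat -> R) (n : nat) : R := (v (S n) - v n) / h.
Definition Dm (h : R) (v : nat -> R) (n : nat) : R := (v n - v (Nat.pred n)) / h.
Definition lap (h : R) (v : nat -> R) (n : nat) : R := Dp h (Dm h v) n.

Definition inL2 (v : nat -> R) : Prop := ex_series (fun k => (v (S k)) ^ 2).
Definition L2sq (h : R) (v : nat -> R) : R := h * Series (fun k => (v (S k)) ^ 2).

Definition in0T (T t : R) : Prop := 0 <= t <= T.
Definition cont_on_0T (T : R) (w : R -> R) : Prop :=
  forall t0, in0T T t0 ->
    filterlim w (within (in0T T) (locally t0)) (locally (w t0)).

(* phi(c) = A + B c with A = 1 *)
Definition phi (B c : R) : R := 1 + B * c.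

Definition holder_0T (T beta : R) (psi : R -> R) : Prop :=
  exists L, forall t s, in0T T t -> in0T T s -> t <> s ->
    Rabs (psi t - psi s) <= L * Rpower (Rabs (t - s)) beta.

Definition condF (h T eta K : R) (psi : R -> R) (f : R -> nat -> R) : Prop :=
  (forall t, in0T T t -> inL2 (f t)) /\
  (forall t0, in0T T t0 ->
     filterlim (fun t => L2sq h (fun n => f t n - f t0 n))
               (within (in0T T) (locally t0)) (locally 0)) /\
  (forall t, in0T T t -> inL2 (Dp h (f t))) /\
  ex_RInt (fun t => L2sq h (Dp h (f t))) 0 T /\
  (forall t, in0T T t ->
     L2sq h (f t) + RInt (fun t => L2sq h (Dp h (f t))) 0 T <= K) /\
  (forall t, in0T T t -> f t 0%nat = psi t) /\
  (forall t n, in0T T t -> 0 <= f t n <= eta).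

Definition gcoef (lam B : R) (c0 : nat -> R) (f : R -> nat -> R) (t : R) (n : nat) : R :=
  c0 n / (phi B (c0 n) * exp (lam * RInt (fun tau => f tau n) 0 t) - B * c0 n).

Definition bcoef (B : R) (g : nat -> R) (n : nat) : R := B / (2 * (1 + B * g n)).
Definition gammacoef (lam : R) (g : nat -> R) (n : nat) : R := lam * g n.

Definition lin_rhs (h lam B : R) (c0 : nat -> R) (f : R -> nat -> R)
    (s : R -> nat -> R) (t : R) (n : nat) : R :=
  let g := gcoef lam B c0 f t in
  lap h (s t) n
  + bcoef B g n * (Dp h g n * Dp h (s t) n + Dm h g n * Dm h (s t) n)
  + gammacoef lam g n * s t n * (B * f t n - 1).

Definition is_lin_solution (h lam B T : R) (psi : R -> R) (s0 c0 : nat -> R)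
    (f : R -> nat -> R) (s : R -> nat -> R) : Prop :=
  (exists M, forall t n, in0T T t -> Rabs (s t n) <= M) /\
  (forall n, cont_on_0T T (fun t => s t n)) /\
  (forall t n, 0 < t < T -> (1 <= n)%nat ->
     is_derive (fun t' => s t' n) t (lin_rhs h lam B c0 f s t n)) /\
  (forall n, (1 <= n)%nat -> s 0 n = s0 n) /\
  (forall t, in0T T t -> s t 0%nat = psi t).

Definition is_heat_solution (h T : R) (psi : R -> R) (u : R -> nat -> R) : Prop :=
  (exists M, forall t n, in0T T t -> Rabs (u t n) <= M) /\
  (forall n, cont_on_0T T (fun t => u t n)) /\
  (forall t n, 0 < t < T -> (1 <= n)%nat ->
     is_derive (fun t' => u t' n) t (lap h (u t) n)) /\
  (forall n, (1 <= n)%nat -> u 0 n = 0) /\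
  (forall t, in0T T t -> u t 0%nat = psi t).

From Coquelicot Require Import Coquelicot.
From Stdlib Require Import Reals Lra Lia Classical_Prop.
Open Scope R_scope.

(* Both [s] and [u] solve semi-discrete parabolic equations of the form
   [dv/dt = a+ (v(n+1) - v(n)) + a- (v(n-1) - v(n)) + c v(n)] with bounded
   [a+, a- >= 0] and [c <= 0]: for [s] this rests on
   [1 + B g >= phimin / (phimin + C0) > 0], and on [B f - 1 < 0], which uses
   [eta < 1] when [B = 1]. Their initial and boundary data lie in [0, eta], so the
   maximum principle applied to [v - eta] and [- v - eta] gives [|s|, |u| <= eta].
   On the unbounded lattice the maximum principle is proved for the penalized
   function [w - eps (1 + n) e^((A+1) t)], which attains its maximum, and then
   letting [eps] go to 0. *)

Lemma cont_on_0T_epsilon_delta T F t0 :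
  cont_on_0T T F -> in0T T t0 -> forall eps, 0 < eps ->
  exists d, 0 < d /\
    forall t, in0T T t -> Rabs (t - t0) < d -> Rabs (F t - F t0) < eps.
Proof.
intros HF Ht0 eps Heps.
destruct (proj1 (filterlim_locally _ _) (HF t0 Ht0) (mkposreal eps Heps)) as [d Hd].
exists d; split; [apply cond_pos|].
intros t Ht Htd. exact (Hd t Htd Ht).
Qed.

Lemma cont_on_0T_of_continuity T F :
  (forall x, continuity_pt F x) -> cont_on_0T T F.
Proof.
intros HF t0 _. apply (filterlim_filter_le_1 _ (filter_le_within _)).
now apply continuity_pt_filterlim.
Qed.

Lemma cont_on_0T_plus T F G :
  cont_on_0T T F -> cont_on_0T T G -> cont_on_0T T (fun t => F t + G t).
Proof.
intros HF HG t0 Ht0.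
exact (filterlim_comp_2 _ _ Rplus (HF t0 Ht0) (HG t0 Ht0) (filterlim_plus _ _)).
Qed.

Lemma cont_on_0T_scal T k F :
  cont_on_0T T F -> cont_on_0T T (fun t => k * F t).
Proof.
intros HF t0 Ht0. exact (filterlim_comp _ _ _ _ _ _ _ _ (HF t0 Ht0) (filterlim_scal_r k _)).
Qed.

Lemma cont_on_0T_affine T k b F :
  cont_on_0T T F -> cont_on_0T T (fun t => k * F t + b).
Proof.
intros HF. apply cont_on_0T_plus; [now apply cont_on_0T_scal|].
apply cont_on_0T_of_continuity. intros x. apply continuity_pt_const. now intros ? ?.
Qed.

(* Extends a function on [0, a] to R by constant values, so that the extreme
   value theorem [continuity_ab_maj], which asks for two-sided continuity, applies. *)
Definition clamp (a x : R) : R := Rmax 0 (Rmin a x).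

Lemma clamp_range a x : 0 <= a -> 0 <= clamp a x <= a.
Proof. intros. unfold clamp, Rmax, Rmin. repeat destruct Rle_dec; lra. Qed.

Lemma clamp_id a x : 0 <= x <= a -> clamp a x = x.
Proof. intros. unfold clamp, Rmax, Rmin. repeat destruct Rle_dec; lra. Qed.

Lemma clamp_lipschitz a x y : 0 <= a -> Rabs (clamp a x - clamp a y) <= Rabs (x - y).
Proof.
intros. unfold clamp, Rmax, Rmin.
repeat destruct Rle_dec; unfold Rabs; repeat destruct Rcase_abs; lra.
Qed.

Lemma continuity_pt_clamp_comp T a F c :
  0 <= a <= T -> cont_on_0T T F -> continuity_pt (fun x => F (clamp a x)) c.
Proof.
intros Ha HF eps Heps.
assert (Hc : in0T T (clamp a c)) by (pose proof (clamp_range a c); unfold in0T; lra).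
destruct (cont_on_0T_epsilon_delta T F _ HF Hc eps Heps) as [d [Hd HFd]].
exists d; split; [exact Hd|]. intros x [_ Hx]. simpl in Hx. unfold R_dist in *.
apply HFd.
- pose proof (clamp_range a x); unfold in0T; lra.
- eapply Rle_lt_trans; [apply clamp_lipschitz; lra | exact Hx].
Qed.

Lemma cont_on_0T_argmax T a F :
  0 <= a <= T -> cont_on_0T T F ->
  exists tm, 0 <= tm <= a /\ forall s, 0 <= s <= a -> F s <= F tm.
Proof.
intros Ha HF.
destruct (continuity_ab_maj (fun x => F (clamp a x)) 0 a (proj1 Ha)
            (fun c _ => continuity_pt_clamp_comp T a F c Ha HF)) as [tm [Hmax Htm]].
exists tm; split; [exact Htm|]. intros s Hs.
specialize (Hmax s Hs). rewrite !clamp_id in Hmax by lra. exact Hmax.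
Qed.

Lemma box_argmax (z : R -> nat -> R) a :
  (forall n, exists tm, 0 <= tm <= a /\ forall s, 0 <= s <= a -> z s n <= z tm n) ->
  forall N, exists k tm, (k <= N)%nat /\ 0 <= tm <= a /\
    forall m s, (m <= N)%nat -> 0 <= s <= a -> z s m <= z tm k.
Proof.
intros Hmax. induction N as [|N IH].
- destruct (Hmax 0%nat) as [tm [Htm Hz]]. exists 0%nat, tm.
  split; [lia|split; [lra|]]. intros m s Hm Hs. replace m with 0%nat by lia. auto.
- destruct IH as [k [tm [Hk [Htm Hz]]]].
  destruct (Hmax (S N)) as [tm' [Htm' Hz']].
  destruct (Rle_or_lt (z tm' (S N)) (z tm k)) as [Hle|Hlt].
  + exists k, tm. split; [lia|split; [lra|]]. intros m s Hm Hs.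
    destruct (Nat.eq_dec m (S N)) as [->|Hne].
    * eapply Rle_trans; [apply Hz'|]; auto.
    * apply Hz; [lia|auto].
  + exists (S N), tm'. split; [lia|split; [lra|]]. intros m s Hm Hs.
    destruct (Nat.eq_dec m (S N)) as [->|Hne]; [auto|].
    eapply Rle_trans; [apply Hz; [lia|auto]|lra].
Qed.

Lemma is_derive_nonneg_at_left_max g t l :
  0 < t -> is_derive g t l -> (forall y, 0 <= y <= t -> g y <= g t) -> 0 <= l.
Proof.
intros Ht Hd Hmax. apply Rnot_lt_le. intros Hl.
apply is_derive_Reals in Hd. destruct (Hd (- l / 2)) as [d Hdd]; [lra|].
pose proof (cond_pos d).
set (k := - Rmin (d / 2) t).
assert (Hk : 0 < Rmin (d / 2) t) by (apply Rmin_pos; lra).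
assert (Rmin (d / 2) t <= d / 2) by apply Rmin_l.
assert (Rmin (d / 2) t <= t) by apply Rmin_r.
assert (Hk0 : k <> 0) by (unfold k; lra).
assert (Hkd : Rabs k < d) by (unfold k; rewrite Rabs_Ropp, Rabs_pos_eq; lra).
specialize (Hdd k Hk0 Hkd). apply Rabs_def2 in Hdd.
assert (Hg : g (t + k) <= g t) by (apply Hmax; unfold k; lra).
assert (Hq : 0 <= (g (t + k) - g t) / k).
{ apply Rnot_lt_le. intros Hq.
  assert ((g (t + k) - g t) / k * k = g (t + k) - g t) by (field; lra).
  assert (k < 0) by (unfold k; lra). nra. }
lra.
Qed.

Lemma cont_on_0T_nonpos_at_T T F :
  0 < T -> cont_on_0T T F -> (forall t, 0 <= t < T -> F t <= 0) -> F T <= 0.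
Proof.
intros HT HF Hneg. apply Rnot_lt_le. intros Hpos.
destruct (cont_on_0T_epsilon_delta T F T HF ltac:(unfold in0T; lra) (F T / 2))
  as [d [Hd HFd]]; [lra|].
set (t := Rmax 0 (T - d / 2)).
assert (0 <= t) by apply Rmax_l.
assert (T - d / 2 <= t) by apply Rmax_r.
assert (t < T) by (unfold t, Rmax; destruct Rle_dec; lra).
specialize (HFd t ltac:(unfold in0T; lra) ltac:(rewrite Rabs_left; lra)).
specialize (Hneg t ltac:(lra)). apply Rabs_def2 in HFd. lra.
Qed.

Lemma exists_nat_gt x : exists N : nat, x < INR N.
Proof.
destruct (nfloor_ex (Rmax 0 x) (Rmax_l 0 x)) as [N HN].
exists (S N). rewrite S_INR. pose proof (Rmax_r 0 x). lra.
Qed.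

Definition disc_ell (ap am c v : nat -> R) (n : nat) : R :=
  ap n * (v (S n) - v n) + am n * (v (Nat.pred n) - v n) + c n * v n.

Section MaximumPrinciple.

Variables (T A : R) (ap am c w d : R -> nat -> R).

Hypothesis HT : 0 < T.
Hypothesis HA : 0 <= A.
Hypothesis Hcoef : forall t n, 0 < t < T -> (1 <= n)%nat ->
  0 <= ap t n <= A /\ 0 <= am t n /\ c t n <= 0.
Hypothesis Hbounded : exists M, forall t n, in0T T t -> w t n <= M.
Hypothesis Hcont : forall n, cont_on_0T T (fun t => w t n).
Hypothesis Hderiv : forall t n, 0 < t < T -> (1 <= n)%nat ->
  is_derive (fun t' => w t' n) t (d t n).
Hypothesis Hsub : forall t n, 0 < t < T -> (1 <= n)%nat ->
  d t n <= disc_ell (ap t) (am t) (c t) (w t) n.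
Hypothesis Hinit : forall n, (1 <= n)%nat -> w 0 n <= 0.
Hypothesis Hbdry : forall t, in0T T t -> w t 0%nat <= 0.

(* The barrier grows linearly in n, so that maxima exist on the unbounded
   lattice, and exponentially in t at a rate exceeding the bound A on ap. *)
Let K := A + 1.
Let penalized (eps t : R) (n : nat) : R := w t n - eps * (1 + INR n) * exp (K * t).

Lemma penalized_max_nonpos eps tm k :
  0 < eps -> 0 <= tm < T ->
  (forall m s, 0 <= s <= tm -> penalized eps s m <= penalized eps tm k) ->
  w tm k <= 0.
Proof.
intros Heps Htm Hmax. destruct k as [|k]; [apply Hbdry; unfold in0T; lra|].
destruct (Req_dec tm 0) as [->|Htm0]; [apply Hinit; lia|].
apply Rnot_lt_le. intros Hpos.
assert (Hint : 0 < tm < T) by lra.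
set (E := exp (K * tm)). assert (HE : 0 < E) by apply exp_pos.
assert (Hdz : is_derive (fun t => penalized eps t (S k)) tm
                (d tm (S k) - eps * (1 + INR (S k)) * (K * E))).
{ unfold penalized. set (a := 1 + INR (S k)).
  apply is_derive_Reals, derivable_pt_lim_minus; apply is_derive_Reals.
  - apply Hderiv; [exact Hint|lia].
  - auto_derive; auto. unfold E; ring. }
assert (Hd0 := is_derive_nonneg_at_left_max _ _ _ (proj1 Hint) Hdz (fun s Hs => Hmax _ s Hs)).
pose proof (Hmax (S (S k)) tm ltac:(lra)) as Hright.
pose proof (Hmax k tm ltac:(lra)) as Hleft.
unfold penalized in Hright, Hleft. fold E in Hright, Hleft.
rewrite !S_INR in *.
destruct (Hcoef tm (S k) Hint ltac:(lia)) as [Hap [Ham Hc]].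
specialize (Hsub tm (S k) Hint ltac:(lia)). unfold disc_ell in Hsub. simpl Nat.pred in Hsub.
assert (Hup : ap tm (S k) * (w tm (S (S k)) - w tm (S k)) <= A * (eps * E)).
{ apply Rle_trans with (ap tm (S k) * (eps * E)); [apply Rmult_le_compat_l; lra|].
  apply Rmult_le_compat_r; [apply Rlt_le, Rmult_lt_0_compat|]; lra. }
assert (Hdown : am tm (S k) * (w tm k - w tm (S k)) <= 0).
{ assert (w tm k - w tm (S k) <= 0) by nra. nra. }
assert (Hzero : c tm (S k) * w tm (S k) <= 0) by nra.
pose proof (pos_INR k).
assert (0 <= eps * E * (A + 1) * (1 + INR k)) by
  (repeat apply Rmult_le_pos; lra).
unfold K in Hd0. nra.
Qed.

Lemma subsolution_nonpos_before_T t1 n1 : 0 <= t1 < T -> w t1 n1 <= 0.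
Proof.
intros Ht1. apply Rnot_lt_le. intros Hpos.
pose proof (pos_INR n1). pose proof (exp_pos (K * t1)).
assert (HE1 : 0 < (1 + INR n1) * exp (K * t1)) by nra.
set (eps := w t1 n1 / (2 * ((1 + INR n1) * exp (K * t1)))).
assert (Heps : 0 < eps) by (unfold eps; apply Rdiv_lt_0_compat; lra).
assert (Hz1 : penalized eps t1 n1 = w t1 n1 / 2) by (unfold penalized, eps; field; repeat split; lra).
assert (Hexp : forall t, 0 <= t -> 1 <= exp (K * t)).
{ intros t Ht. pose proof (exp_ineq1_le (K * t)). assert (0 <= K * t) by (unfold K; nra). lra. }
destruct Hbounded as [M HM]. destruct (exists_nat_gt (M / eps)) as [N0 HN0].
assert (Hfar : forall t n, in0T T t -> (N0 <= n)%nat -> penalized eps t n < 0).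
{ intros t n Ht Hn. unfold penalized. apply le_INR in Hn.
  assert (M < eps * INR N0).
  { apply (Rmult_lt_compat_l eps) in HN0; [|exact Heps].
    replace (eps * (M / eps)) with M in HN0 by (field; lra). exact HN0. }
  pose proof (HM t n Ht). pose proof (Hexp t (proj1 Ht)). pose proof (pos_INR n).
  assert (eps * INR N0 <= eps * (1 + INR n)) by nra.
  assert (0 <= eps * (1 + INR n) * (exp (K * t) - 1))
    by (apply Rmult_le_pos; [apply Rmult_le_pos|]; lra).
  lra. }
assert (Hrow : forall n, exists tm, 0 <= tm <= t1 /\
          forall s, 0 <= s <= t1 -> penalized eps s n <= penalized eps tm n).
{ intros n. apply (cont_on_0T_argmax T); [lra|]. unfold penalized.
  apply cont_on_0T_plus; [apply Hcont|]. apply cont_on_0T_of_continuity.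
  intros x. apply derivable_continuous_pt.
  exists (- (eps * (1 + INR n) * (K * exp (K * x)))).
  apply is_derive_Reals. auto_derive; auto. ring. }
destruct (box_argmax _ t1 Hrow (Nat.max N0 n1)) as [k [tm [Hk [Htm Hbox]]]].
assert (Hz1k : penalized eps t1 n1 <= penalized eps tm k) by (apply Hbox; [lia|lra]).
assert (Hmax : forall m s, 0 <= s <= tm -> penalized eps s m <= penalized eps tm k).
{ intros m s Hs. destruct (Nat.le_gt_cases m (Nat.max N0 n1)) as [Hm|Hm]; [apply Hbox; [exact Hm|lra]|].
  pose proof (Hfar s m ltac:(unfold in0T; lra) ltac:(lia)). lra. }
pose proof (penalized_max_nonpos eps tm k Heps ltac:(lra) Hmax) as Hwk.
unfold penalized in Hz1k. pose proof (pos_INR k). pose proof (exp_pos (K * tm)).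
assert (0 < eps * (1 + INR k) * exp (K * tm)) by (apply Rmult_lt_0_compat; [apply Rmult_lt_0_compat|]; lra).
unfold penalized in Hz1. lra.
Qed.

Theorem subsolution_nonpos t n : in0T T t -> w t n <= 0.
Proof.
intros Ht. destruct (Rlt_or_le t T) as [HtT|HtT].
- apply subsolution_nonpos_before_T. unfold in0T in Ht. lra.
- replace t with T by (unfold in0T in Ht; lra).
  apply (cont_on_0T_nonpos_at_T T (fun t => w t n)); auto.
  intros t' Ht'. now apply subsolution_nonpos_before_T.
Qed.

End MaximumPrinciple.

Lemma disc_ell_affine (ap am c v : nat -> R) sg eta n :
  c n * eta <= 0 ->
  sg * disc_ell ap am c v n <= disc_ell ap am c (fun m => sg * v m + - eta) n.
Proof. intros. unfold disc_ell. nra. Qed.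

Lemma is_derive_affine (g : R -> R) x l k b :
  is_derive g x l -> is_derive (fun t => k * g t + b) x (k * l).
Proof.
intros Hg. apply is_derive_Reals. replace (k * l) with (k * l + 0) by ring.
apply (derivable_pt_lim_plus (fun t => k * g t) (fun _ => b)).
- now apply derivable_pt_lim_scal, is_derive_Reals.
- apply derivable_pt_lim_const.
Qed.

Theorem disc_parabolic_abs_le T A eta (ap am c v d : R -> nat -> R) :
  0 < T -> 0 <= A -> 0 <= eta ->
  (forall t n, 0 < t < T -> (1 <= n)%nat ->
     0 <= ap t n <= A /\ 0 <= am t n /\ c t n <= 0) ->
  (exists M, forall t n, in0T T t -> Rabs (v t n) <= M) ->
  (forall n, cont_on_0T T (fun t => v t n)) ->
  (forall t n, 0 < t < T -> (1 <= n)%nat -> is_derive (fun t' => v t' n) t (d t n)) ->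
  (forall t n, 0 < t < T -> (1 <= n)%nat -> d t n = disc_ell (ap t) (am t) (c t) (v t) n) ->
  (forall n, (1 <= n)%nat -> Rabs (v 0 n) <= eta) ->
  (forall t, in0T T t -> Rabs (v t 0%nat) <= eta) ->
  forall t n, in0T T t -> Rabs (v t n) <= eta.
Proof.
intros HT HA Heta Hcoef [M HM] Hcont Hderiv Heq Hinit Hbdry.
assert (Hside : forall sg, sg = 1 \/ sg = -1 -> forall t n, in0T T t -> sg * v t n + - eta <= 0).
{ intros sg Hsg.
  assert (Hsg_abs : forall x, sg * x <= Rabs x)
    by (intros x; unfold Rabs; destruct Rcase_abs; destruct Hsg as [-> | ->]; lra).
  apply (subsolution_nonpos T A ap am c _ (fun t n => sg * d t n)); auto.
  - exists (M + - eta). intros t n Ht. specialize (HM t n Ht). specialize (Hsg_abs (v t n)). lra.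
  - intros n. now apply cont_on_0T_affine.
  - intros t n Ht Hn. now apply is_derive_affine, Hderiv.
  - intros t n Ht Hn. rewrite Heq by assumption. apply disc_ell_affine.
    destruct (Hcoef t n Ht Hn) as (_ & _ & Hc). nra.
  - intros n Hn. specialize (Hinit n Hn). specialize (Hsg_abs (v 0 n)). lra.
  - intros t Ht. specialize (Hbdry t Ht). specialize (Hsg_abs (v t 0%nat)). lra. }
intros t n Ht. apply Rabs_le.
pose proof (Hside 1 (or_introl eq_refl) t n Ht).
pose proof (Hside (-1) (or_intror eq_refl) t n Ht). lra.
Qed.

(* Coquelicot's [RInt] of a non-integrable function is the junk value 0. *)
Lemma RInt_not_ex (F : R -> R) a b : ~ ex_RInt F a b -> RInt F a b = 0.
Proof.
intros HF. unfold RInt, iota.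
change (R_complete_lim (fun P : R -> Prop => forall x, is_RInt F a b x -> P x) = 0).
unfold R_complete_lim.
assert (E : Lub_Rbar (fun x => forall y, is_RInt F a b y ->
              ball (x + 1) {| pos := 1; cond_pos := Rlt_0_1 |} y) = p_infty).
{ apply is_lub_Rbar_unique. split.
  - intros x _. exact I.
  - intros [x| |] Hx; simpl; auto.
    + exfalso. assert (x + 1 <= x); [|lra].
      apply (Hx (x + 1)). intros y Hy. exfalso. apply HF. now exists y.
    + apply (Hx 0). intros y Hy. exfalso. apply HF. now exists y. }
now rewrite E.
Qed.

Lemma RInt_ge_0_nonint (F : R -> R) b :
  0 <= b -> (forall x, 0 <= x <= b -> 0 <= F x) -> 0 <= RInt F 0 b.
Proof.
intros Hb HF. destruct (classic (ex_RInt F 0 b)) as [Hex|Hex].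
- apply RInt_ge_0; auto. intros x Hx. apply HF. lra.
- rewrite RInt_not_ex by exact Hex. lra.
Qed.

Lemma Rdiv_le_cross a b c d : 0 < b -> 0 < d -> a * d <= c * b -> a / b <= c / d.
Proof.
intros Hb Hd H. apply Rmult_le_reg_r with (b * d); [nra|].
replace (a / b * (b * d)) with (a * d) by (field; lra).
replace (c / d * (b * d)) with (c * b) by (field; lra). exact H.
Qed.

Lemma gfrac_bounds B c e C0 phimin :
  (B = -1 \/ B = 1) -> 0 < c <= C0 -> 1 <= e -> 0 < phimin <= phi B c ->
  let g := c / (phi B c * e - B * c) in
  0 < g /\ phimin / (phimin + C0) <= 1 + B * g <= 1 + C0.
Proof.
intros HB Hc He Hphi g.
assert (Hdl : phimin / (phimin + C0) <= 1 / 1) by (apply Rdiv_le_cross; lra).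
destruct HB as [-> | ->]; unfold phi in *.
- set (p := (1 + -1 * c) * e) in *.
  assert (Hp : phimin <= p) by (unfold p; nra).
  assert (Hg0 : 0 < g) by (unfold g; apply Rdiv_lt_0_compat; lra).
  assert (Hg : 1 + -1 * g = p / (p - -1 * c)) by (unfold g; field; lra).
  split; [exact Hg0|]. split; [|lra].
  rewrite Hg. apply Rdiv_le_cross; [lra|lra|nra].
- assert (Hden : 1 <= (1 + 1 * c) * e - 1 * c) by nra.
  assert (Hg0 : 0 < g) by (unfold g; apply Rdiv_lt_0_compat; lra).
  assert (Hgc : g <= c / 1) by (unfold g; apply Rdiv_le_cross; nra).
  lra.
Qed.

Definition lin_ap (h B : R) (g : nat -> R) (n : nat) : R :=
  (1 + bcoef B g n * (g (S n) - g n)) / (h * h).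
Definition lin_am (h B : R) (g : nat -> R) (n : nat) : R :=
  (1 - bcoef B g n * (g n - g (Nat.pred n))) / (h * h).
Definition lin_c (lam B : R) (g ft : nat -> R) (n : nat) : R :=
  gammacoef lam g n * (B * ft n - 1).

Lemma lin_rhs_disc_ell h lam B c0 f s t n : 0 < h ->
  let g := gcoef lam B c0 f t in
  lin_rhs h lam B c0 f s t (S n) =
  disc_ell (lin_ap h B g) (lin_am h B g) (lin_c lam B g (f t)) (s t) (S n).
Proof.
intros Hh g. unfold lin_rhs, disc_ell, lin_ap, lin_am, lin_c, lap, Dp, Dm.
simpl Nat.pred. fold g. field. lra.
Qed.

(* With [p = 1 + B g n] and [q = 1 + B g (n+1)], the numerator of [lin_ap] is
   [(p + q) / (2 p)]; similarly for [lin_am]. *)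
Lemma lin_ap_bounds h B g n dl G :
  0 < h -> 0 < dl -> (forall m, dl <= 1 + B * g m <= G) ->
  0 <= lin_ap h B g n <= (1 / 2 + G / (2 * dl)) / (h * h).
Proof.
intros Hh Hdl Hg. destruct (Hg n) as [Hp Hp']. destruct (Hg (S n)) as [Hq Hq'].
assert (Hhh : 0 < h * h) by nra.
assert (Hnum : 1 + bcoef B g n * (g (S n) - g n) = 1 / 2 + (1 + B * g (S n)) / (2 * (1 + B * g n)))
  by (unfold bcoef; field; lra).
unfold lin_ap. rewrite Hnum.
assert (0 <= (1 + B * g (S n)) / (2 * (1 + B * g n))) by (apply Rdiv_le_0_compat; lra).
assert ((1 + B * g (S n)) / (2 * (1 + B * g n)) <= G / (2 * dl)) by (apply Rdiv_le_cross; nra).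
split.
- apply Rdiv_le_0_compat; lra.
- apply Rmult_le_compat_r; [apply Rlt_le, Rinv_0_lt_compat|]; lra.
Qed.

Lemma lin_am_nonneg h B g n dl :
  0 < h -> 0 < dl -> (forall m, dl <= 1 + B * g m) -> 0 <= lin_am h B g n.
Proof.
intros Hh Hdl Hg. pose proof (Hg n). pose proof (Hg (Nat.pred n)).
assert (Hnum : 1 - bcoef B g n * (g n - g (Nat.pred n)) =
               1 / 2 + (1 + B * g (Nat.pred n)) / (2 * (1 + B * g n)))
  by (unfold bcoef; field; lra).
unfold lin_am. rewrite Hnum. apply Rdiv_le_0_compat; [|nra].
assert (0 <= (1 + B * g (Nat.pred n)) / (2 * (1 + B * g n))) by (apply Rdiv_le_0_compat; lra).
lra.
Qed.

Section LinearizedEquation.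

Variables (h lam B T eta cm C0 phimin : R) (c0 : nat -> R) (f : R -> nat -> R).

Hypothesis Hh : 0 < h.
Hypothesis HB : B = -1 \/ B = 1.
Hypothesis Hlam : 0 < lam.
Hypothesis Hcm : 0 < cm.
Hypothesis Hc0 : forall n, cm <= c0 n <= C0.
Hypothesis Hphimin : 0 < phimin.
Hypothesis Hphi : forall c, 0 <= c <= C0 -> phimin <= phi B c.
Hypothesis Hf : forall t n, in0T T t -> 0 <= f t n <= eta.
Hypothesis HB1 : B = 1 -> eta < 1.

Lemma gcoef_bounds t m : in0T T t ->
  0 < gcoef lam B c0 f t m /\
  phimin / (phimin + C0) <= 1 + B * gcoef lam B c0 f t m <= 1 + C0.
Proof.
intros Ht. destruct (Hc0 m) as [Hcm_m HC0_m].
assert (HI : 0 <= RInt (fun tau => f tau m) 0 t).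
{ apply RInt_ge_0_nonint; [apply Ht|]. intros x Hx. apply Hf. unfold in0T in *; lra. }
assert (He : 1 <= exp (lam * RInt (fun tau => f tau m) 0 t)).
{ pose proof (exp_ineq1_le (lam * RInt (fun tau => f tau m) 0 t)). nra. }
apply (gfrac_bounds B (c0 m) _ C0 phimin HB ltac:(lra) He).
split; [exact Hphimin|]. apply Hphi. lra.
Qed.

Lemma lin_coef_bounds t n : in0T T t ->
  let g := gcoef lam B c0 f t in
  0 <= lin_ap h B g n <= (1 / 2 + (1 + C0) / (2 * (phimin / (phimin + C0)))) / (h * h) /\
  0 <= lin_am h B g n /\ lin_c lam B g (f t) n <= 0.
Proof.
intros Ht g. pose proof (Hc0 0%nat).
assert (Hdl : 0 < phimin / (phimin + C0)) by (apply Rdiv_lt_0_compat; lra).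
split; [|split].
- apply lin_ap_bounds; [exact Hh|exact Hdl|]. intros m. apply (gcoef_bounds t m Ht).
- apply (lin_am_nonneg _ _ _ _ _ Hh Hdl). intros m. apply (gcoef_bounds t m Ht).
- unfold lin_c, gammacoef. destruct (gcoef_bounds t n Ht) as [Hg _].
  destruct (Hf t n Ht).
  assert (B * f t n - 1 < 0) by (destruct HB as [-> | ->]; [|specialize (HB1 eq_refl)]; lra).
  assert (0 < lam * g n) by (apply Rmult_lt_0_compat; assumption).
  nra.
Qed.

Theorem lin_solution_abs_le psi s0 s :
  0 < T -> 0 <= eta ->
  (forall t, in0T T t -> 0 <= psi t <= eta) -> (forall n, 0 <= s0 n <= eta) ->
  is_lin_solution h lam B T psi s0 c0 f s ->
  forall t n, in0T T t -> Rabs (s t n) <= eta.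
Proof.
intros HT Heta Hpsi Hs0 (Hbd & Hcont & Hderiv & Hinit & Hbdry).
apply (disc_parabolic_abs_le T
         ((1 / 2 + (1 + C0) / (2 * (phimin / (phimin + C0)))) / (h * h)) eta
         (fun t => lin_ap h B (gcoef lam B c0 f t)) (fun t => lin_am h B (gcoef lam B c0 f t))
         (fun t => lin_c lam B (gcoef lam B c0 f t) (f t)) s (lin_rhs h lam B c0 f s));
  auto.
- pose proof (Hc0 0%nat).
  assert (0 < phimin / (phimin + C0)) by (apply Rdiv_lt_0_compat; lra).
  apply Rdiv_le_0_compat; [|nra].
  assert (0 <= (1 + C0) / (2 * (phimin / (phimin + C0)))) by (apply Rdiv_le_0_compat; lra).
  lra.
- intros t n Ht _. apply lin_coef_bounds. unfold in0T; lra.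
- intros t [|n] _ Hn; [lia|]. now apply lin_rhs_disc_ell.
- intros n Hn. rewrite Hinit by exact Hn. apply Rabs_le. specialize (Hs0 n). lra.
- intros t Ht. rewrite Hbdry by exact Ht. apply Rabs_le. specialize (Hpsi t Ht). lra.
Qed.

End LinearizedEquation.

Lemma lap_disc_ell h (v : nat -> R) n : 0 < h ->
  lap h v (S n) = disc_ell (fun _ => 1 / (h * h)) (fun _ => 1 / (h * h)) (fun _ => 0) v (S n).
Proof. intros Hh. unfold lap, disc_ell, Dp, Dm. simpl Nat.pred. field. lra. Qed.

Theorem heat_solution_abs_le h T eta psi u :
  0 < h -> 0 < T -> 0 <= eta -> (forall t, in0T T t -> 0 <= psi t <= eta) ->
  is_heat_solution h T psi u ->
  forall t n, in0T T t -> Rabs (u t n) <= eta.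
Proof.
intros Hh HT Heta Hpsi (Hbd & Hcont & Hderiv & Hinit & Hbdry).
assert (Hhh : 0 <= 1 / (h * h)) by (apply Rdiv_le_0_compat; nra).
apply (disc_parabolic_abs_le T (1 / (h * h)) eta (fun _ _ => 1 / (h * h)) (fun _ _ => 1 / (h * h))
         (fun _ _ => 0) u (fun t => lap h (u t))); auto.
- intros t n _ _. lra.
- intros t [|n] _ Hn; [lia|]. now apply lap_disc_ell.
- intros n Hn. rewrite Hinit by exact Hn. rewrite Rabs_R0. exact Heta.
- intros t Ht. rewrite Hbdry by exact Ht. apply Rabs_le. specialize (Hpsi t Ht). lra.
Qed.

Theorem mainTheorem8
  (h B lam T eta beta cm C0 phimin phimax K : R)
  (psi : R -> R) (s0 c0 : nat -> R) (f s u : R -> nat -> R)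
  (Hh : 0 < h)
  (HB : B = -1 \/ B = 1)
  (Hlam : 0 < lam) (HT : 0 < T) (Heta : 0 < eta)
  (Hbeta : 1/4 < beta < 1/2)
  (Hpsi_hol : holder_0T T beta psi)
  (Hpsi_bd : forall t, in0T T t -> 0 <= psi t <= eta)
  (Hpsi0 : psi 0 = 0)
  (Hs0_bd : forall n, 0 <= s0 n <= eta)
  (Hs00 : s0 0%nat = 0)
  (Hs0_L2 : inL2 s0) (HDs0_L2 : inL2 (Dp h s0))
  (Hcm : 0 < cm)
  (Hc0_bd : forall n, cm <= c0 n <= C0)
  (Hc0_L2 : inL2 (fun n => C0 - c0 n)) (HDc0_L2 : inL2 (Dp h c0))
  (Hphimin : 0 < phimin)
  (Hphi : forall c, 0 <= c <= C0 -> phimin <= phi B c <= phimax)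
  (HB1 : B = 1 -> eta < 1)
  (HK : 0 < K)
  (HF : condF h T eta K psi f)
  (Hs : is_lin_solution h lam B T psi s0 c0 f s)
  (Hu : is_heat_solution h T psi u) :
  forall t n, in0T T t -> (1 <= n)%nat -> Rabs (s t n - u t n) <= 2 * eta.
Proof.
intros t n Ht _.
destruct HF as (_ & _ & _ & _ & _ & _ & Hf_bd).
assert (Hphi_min : forall c, 0 <= c <= C0 -> phimin <= phi B c)
  by (intros c Hc; apply (Hphi c Hc)).
assert (Hs_abs : Rabs (s t n) <= eta)
  by (apply (lin_solution_abs_le h lam B T eta cm C0 phimin c0 f) with psi s0; auto; lra).
assert (Hu_abs : Rabs (u t n) <= eta)
  by (apply (heat_solution_abs_le h T eta psi); auto; lra).
eapply Rle_trans; [apply Rabs_triang|]. rewrite Rabs_Ropp. lra.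
Qed.
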